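(* Let $T:V\to\mathfrak g$ be an $\mathcal O$-operator on a Lie algebra $\mathfrak g$ with respect to a representation $(V;\rho)$. Let $\Phi:\mathrm{Hom}(\wedge^kV,\mathfrak g)\to\mathrm{Hom}(\wedge^kV\otimes V,V)$ be given by $\Phi(f)(u_1,\dots,u_k,u_{k+1})=\rho(f(u_1,\dots,u_k))(u_{k+1})$. Then $\Phi$ is a homomorphism of cochain complexes from $(\bigoplus_k\mathrm{Hom}(\wedge^kV,\mathfrak g),d_{\bar\rho})$ to $(\bigoplus_k\mathrm{Hom}(\wedge^kV\otimes V,V),d_{\mathrm{reg}})$, i.e. $d_{\mathrm{reg}}\circ\Phi=\Phi\circ d_{\bar\rho}$. Consequently $\Phi$ induces homomorphisms $\Phi_*:\mathcal H^k(V,\mathfrak g)\to H^{k+1}_{\mathrm{reg}}(V,V)$.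
   Context: An $\mathcal O$-operator: linear $T:V\to\mathfrak g$ with $[Tu,Tv]=T(\rho(Tu)(v)-\rho(Tv)(u))$. Then $u\cdot_Tv=\rho(Tu)(v)$ is a pre-Lie product on $V$ with commutator $[u,v]_T=u\cdot_Tv-v\cdot_Tu$. The map $\bar\rho(u)(x)=[Tu,x]+T\rho(x)(u)$ is a representation of $(V,[\cdot,\cdot]_T)$ on $\mathfrak g$, and $d_{\bar\rho}f(u_1,\dots,u_{k+1})=\sum_{i}(-1)^{i+1}[Tu_i,f(\dots,\hat u_i,\dots)]+\sum_i(-1)^{i+1}T\rho(f(\dots,\hat u_i,\dots))(u_i)+\sum_{i<j}(-1)^{i+j}f([u_i,u_j]_T,u_1,\dots,\hat u_i,\dots,\hat u_j,\dots,u_{k+1})$ for $f\in\mathrm{Hom}(\wedge^kV,\mathfrak g)$; $\mathcal H^k(V,\mathfrak g)$ is its $k$-th cohomology (cochains of degree $k$ are $\mathrm{Hom}(\wedge^kV,\mathfrak g)$). The pre-Lie cochain complex with coefficients in the regular representation has $n$-cochains $\mathrm{Hom}(\wedge^{n-1}V\otimes V,V)$, $n\ge1$, and coboundary $(d_{\mathrm{reg}}f)(x_1,\dots,x_{n+1})=\sum_{i=1}^n(-1)^{i+1}x_i\cdot_Tf(x_1,\dots,\hat x_i,\dots,x_{n+1})+\sum_{i=1}^n(-1)^{i+1}f(x_1,\dots,\hat x_i,\dots,x_n,x_i)\cdot_Tx_{n+1}-\sum_{i=1}^n(-1)^{i+1}f(x_1,\dots,\hat x_i,\dots,x_n,x_i\cdot_Tx_{n+1})+\sum_{1\le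 i<j\le n}(-1)^{i+j}f([x_i,x_j]_T,x_1,\dots,\hat x_i,\dots,\hat x_j,\dots,x_{n+1})$; $H^n_{\mathrm{reg}}(V,V)$ is its $n$-th cohomology. *)

From HB Require Import structures.
From mathcomp Require Import all_boot all_order all_algebra.
Set Implicit Arguments. Unset Strict Implicit. Unset Printing Implicit Defensive.
Import GRing.Theory.
Local Open Scope ring_scope.

(* Conventions: vectors/field K; a finite list of arguments (u_1,...,u_m) is
   encoded by a sequence x : nat -> V using entries x 0, ..., x (m-1)
   (0-based), the remaining entries being irrelevant. *)

Section Defs.
Variables (K : fieldType) (g V : lmodType K).

Definition is_lie_algebra (br : g -> g -> g) : Prop :=
  [/\ (forall a x y z, br (a *: x + y) z = a *: br x z + br y z),
      (forall a x y z, br z (a *: x + y) = a *: br z x + br z y),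
      (forall x, br x x = 0) &
      (forall x y z, br x (br y z) + br y (br z x) + br z (br x y) = 0)].

Definition is_representation (br : g -> g -> g) (rho : g -> V -> V) : Prop :=
  [/\ (forall x a u v, rho x (a *: u + v) = a *: rho x u + rho x v),
      (forall a x y u, rho (a *: x + y) u = a *: rho x u + rho y u) &
      (forall x y u, rho (br x y) u = rho x (rho y u) - rho y (rho x u))].

Definition is_O_operator (br : g -> g -> g) (rho : g -> V -> V) (T : V -> g) : Prop :=
  (forall a u v, T (a *: u + v) = a *: T u + T v) /\
  (forall u v, br (T u) (T v) = T (rho (T u) v - rho (T v) u)).

Definition skip (i : nat) (x : nat -> V) : nat -> V :=
  fun m => if (m < i)%N then x m else x m.+1.
Definition vcons (a : V) (x : nat -> V) : nat -> V :=
  fun m => if m is m'.+1 then x m' else a.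
Definition vset (i : nat) (a : V) (x : nat -> V) : nat -> V :=
  fun m => if m == i then a else x m.

Definition depends_on_first {W : Type} (m : nat) (f : (nat -> V) -> W) : Prop :=
  forall x y, (forall l, (l < m)%N -> x l = y l) -> f x = f y.

Definition multilinear_first {W : lmodType K} (m : nat) (f : (nat -> V) -> W) : Prop :=
  forall x i a u v, (i < m)%N ->
    f (vset i (a *: u + v) x) = a *: f (vset i u x) + f (vset i v x).

Definition alternating_first {W : lmodType K} (m : nat) (f : (nat -> V) -> W) : Prop :=
  forall x i j, (i < j)%N -> (j < m)%N -> x i = x j -> f x = 0.

Definition is_cochain (k : nat) (f : (nat -> V) -> g) : Prop :=
  [/\ depends_on_first k f, multilinear_first k f & alternating_first k f].

(* f ∈ Hom(∧^(n-1) V ⊗ V, V), an n-cochain of the regular pre-Lie complex *)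
Definition is_reg_cochain (n : nat) (f : (nat -> V) -> V) : Prop :=
  [/\ depends_on_first n f, multilinear_first n f & alternating_first n.-1 f].

Variables (br : g -> g -> g) (rho : g -> V -> V) (T : V -> g).

Definition preLie (u v : V) : V := rho (T u) v.
Definition brT (u v : V) : V := preLie u v - preLie v u.

(* d_{bar rho} : Hom(∧^k V, g) -> Hom(∧^(k+1) V, g); indices 0-based,
   so (-1)^(i+1) becomes (-1)^i and (-1)^(i+j) stays (-1)^(i+j). *)
Definition dbar (k : nat) (f : (nat -> V) -> g) : (nat -> V) -> g :=
  fun x =>
    \sum_(i < k.+1) (-1) ^+ i *: br (T (x i)) (f (skip i x))
  + \sum_(i < k.+1) (-1) ^+ i *: T (rho (f (skip i x)) (x i))
  + \sum_(i < k.+1) \sum_(j < k.+1 | (i < j)%N)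
        (-1) ^+ (i + j) *: f (vcons (brT (x i) (x j)) (skip i (skip j x))).

(* d_reg on n-cochains Hom(∧^(n-1) V ⊗ V, V); arguments x 0 .. x n,
   the last argument x_{n+1} of the paper is x n. *)
Definition dreg (n : nat) (f : (nat -> V) -> V) : (nat -> V) -> V :=
  fun x =>
    \sum_(i < n) (-1) ^+ i *: preLie (x i) (f (skip i x))
  + \sum_(i < n) (-1) ^+ i *: preLie (f (vset n.-1 (x i) (skip i x))) (x n)
  - \sum_(i < n) (-1) ^+ i *: f (vset n.-1 (preLie (x i) (x n)) (skip i x))
  + \sum_(i < n) \sum_(j < n | (i < j)%N)
        (-1) ^+ (i + j) *: f (vcons (brT (x i) (x j)) (skip i (skip j x))).

Definition Phi (k : nat) (f : (nat -> V) -> g) : (nat -> V) -> V :=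
  fun x => rho (f x) (x k).

End Defs.

From mathcomp Require Import all_boot all_order all_algebra.
From mathcomp Require Import zify.
Import GRing.Theory.
Local Open Scope ring_scope.

(* Only the representation axiom enters, never the O-operator identity.
   Evaluate d_ρ̄ f at u_1..u_{k+1} and apply ρ(-)(u_{k+2}): by
   ρ([Tu_i, a]) = ρ(Tu_i)ρ(a) - ρ(a)ρ(Tu_i) the bracket sum becomes the first
   and third sums of d_reg Φ(f); ρ(Tρ(a)u_i)(u_{k+2}) is the pre-Lie product
   Φ(f)(..., u_i) ·_T u_{k+2}, which gives the second sum; and the double sums
   agree because deleting u_i, u_j and prepending [u_i, u_j]_T leaves the last
   argument u_{k+2} in place. *)

Set Implicit Arguments.
Unset Strict Implicit.
Unset Printing Implicit Defensive.

Section Arguments.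
Variables (K : fieldType) (V : lmodType K).
Implicit Types (x : nat -> V) (a : V).

Lemma skip_after (k : nat) (i : 'I_k.+1) x : skip i x k = x k.+1.
Proof. by rewrite /skip ltnNge -ltnS ltn_ord. Qed.

Lemma vcons_skip2_after (k : nat) (i j : 'I_k.+1) a x :
  (i < j)%N -> vcons a (skip i (skip j x)) k = x k.+1.
Proof.
case: i j => [i ltik] [j ltjk] /= ltij.
case: k ltik ltjk => [|k] ltik ltjk /=; first lia.
rewrite /skip; have -> : (k < i)%N = false by lia.
by have -> : (k.+1 < j)%N = false by lia.
Qed.

Lemma vset_id (i : nat) a x : vset i a x i = a.
Proof. by rewrite /vset eqxx. Qed.

Lemma vset_other (i m : nat) a x : i != m -> vset i a x m = x m.
Proof. by rewrite /vset eq_sym => /negPf ->. Qed.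

Lemma depends_on_first_vset (W : Type) (k : nat) (f : (nat -> V) -> W) a x :
  depends_on_first k f -> f (vset k a x) = f x.
Proof. by move=> dep_f; apply: dep_f => l ltlk; rewrite vset_other //; lia. Qed.

End Arguments.

Section Representation.
Variables (K : fieldType) (g V : lmodType K).
Variables (br : g -> g -> g) (rho : g -> V -> V).
Hypothesis rho_rep : is_representation br rho.

Lemma rhoDl (y z : g) (u : V) : rho (y + z) u = rho y u + rho z u.
Proof. by case: rho_rep => _ rhoZDl _; rewrite -[y in LHS]scale1r rhoZDl scale1r. Qed.

Lemma rho0l (u : V) : rho 0 u = 0.
Proof. by apply: (addrI (rho 0 u)); rewrite addr0 -rhoDl addr0. Qed.

Lemma rhoZl (c : K) (y : g) (u : V) : rho (c *: y) u = c *: rho y u.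
Proof.
by case: rho_rep => _ rhoZDl _; rewrite -[c *: y]addr0 rhoZDl rho0l addr0.
Qed.

Lemma rho_suml (I : Type) (r : seq I) (P : pred I) (F : I -> g) (u : V) :
  rho (\sum_(i <- r | P i) F i) u = \sum_(i <- r | P i) rho (F i) u.
Proof. exact: (big_morph (rho^~ u) (fun y z => rhoDl y z u) (rho0l u)). Qed.

Lemma Phi_is_reg_cochain (k : nat) (f : (nat -> V) -> g) :
  is_cochain k f -> is_reg_cochain k.+1 (Phi rho k f).
Proof.
case: rho_rep => rhoZDr rhoZDl _ [dep_f lin_f alt_f]; split.
- move=> x y eq_xy; rewrite /Phi (dep_f x y) ?eq_xy // => l ltlk.
  by apply: eq_xy; lia.
- move=> x i c u v; rewrite ltnS leq_eqVlt => /orP[/eqP-> | ltik].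
    by rewrite /Phi !depends_on_first_vset // !vset_id rhoZDr.
  by rewrite /Phi lin_f // !vset_other ?rhoZDl //; lia.
- by move=> x i j ltij ltjk eq_ij; rewrite /Phi (alt_f x i j) // rho0l.
Qed.

Lemma Phi_linear (k : nat) (c : K) (f h : (nat -> V) -> g) (x : nat -> V) :
  Phi rho k (fun y => c *: f y + h y) x = c *: Phi rho k f x + Phi rho k h x.
Proof. by case: rho_rep => _ rhoZDl _; rewrite /Phi rhoZDl. Qed.

Section CochainMap.
Variables (T : V -> g) (k : nat) (f : (nat -> V) -> g) (x : nat -> V).
Hypothesis dep_f : depends_on_first k f.

Lemma rho_dbar_bracket_sum :
  rho (\sum_(i < k.+1) (-1) ^+ i *: br (T (x i)) (f (skip i x))) (x k.+1) =
    \sum_(i < k.+1) (-1) ^+ i *: preLie rho T (x i) (Phi rho k f (skip i x))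
  - \sum_(i < k.+1) (-1) ^+ i *:
      Phi rho k f (vset k (preLie rho T (x i) (x k.+1)) (skip i x)).
Proof.
case: rho_rep => _ _ rho_br.
rewrite rho_suml -sumrB; apply: eq_bigr => i _.
rewrite rhoZl rho_br /Phi skip_after depends_on_first_vset // vset_id.
by rewrite /preLie scalerBr.
Qed.

Lemma rho_dbar_action_sum :
  rho (\sum_(i < k.+1) (-1) ^+ i *: T (rho (f (skip i x)) (x i))) (x k.+1) =
  \sum_(i < k.+1) (-1) ^+ i *:
    preLie rho T (Phi rho k f (vset k (x i) (skip i x))) (x k.+1).
Proof.
rewrite rho_suml; apply: eq_bigr => i _.
by rewrite rhoZl /Phi depends_on_first_vset // vset_id.
Qed.

Lemma rho_dbar_double_sum :
  rho (\sum_(i < k.+1) \sum_(j < k.+1 | (i < j)%N) (-1) ^+ (i + j) *: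
         f (vcons (brT rho T (x i) (x j)) (skip i (skip j x)))) (x k.+1) =
  \sum_(i < k.+1) \sum_(j < k.+1 | (i < j)%N) (-1) ^+ (i + j) *:
    Phi rho k f (vcons (brT rho T (x i) (x j)) (skip i (skip j x))).
Proof.
rewrite rho_suml; apply: eq_bigr => i _; rewrite rho_suml.
by apply: eq_bigr => j ltij; rewrite rhoZl /Phi vcons_skip2_after.
Qed.

Lemma dreg_Phi :
  dreg rho T k.+1 (Phi rho k f) x = Phi rho k.+1 (dbar br rho T k f) x.
Proof.
rewrite [RHS]/Phi /dbar !rhoDl rho_dbar_bracket_sum rho_dbar_action_sum.
by rewrite rho_dbar_double_sum /dreg /= (addrAC (\sum_(i < k.+1) _)).
Qed.

End CochainMap.
End Representation.

Theorem theorem3p6 (K : fieldType) (g V : lmodType K)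
    (br : g -> g -> g) (rho : g -> V -> V) (T : V -> g) :
  is_lie_algebra br -> is_representation br rho -> is_O_operator br rho T ->
  (* Phi maps Hom(∧^k V, g) linearly into Hom(∧^k V ⊗ V, V) *)
  (forall k f, is_cochain k f -> is_reg_cochain k.+1 (Phi rho k f)) /\
  (forall k (a : K) f h x,
      Phi rho k (fun y => a *: f y + h y) x = a *: Phi rho k f x + Phi rho k h x) /\
  (* cochain map: d_reg ∘ Phi = Phi ∘ d_{bar rho} *)
  (forall k f, is_cochain k f ->
      forall x, dreg rho T k.+1 (Phi rho k f) x = Phi rho k.+1 (dbar br rho T k f) x) /\
  (* hence Phi maps cocycles to cocycles ... *)
  (forall k f, is_cochain k f -> (forall x, dbar br rho T k f x = 0) ->
      forall x, dreg rho T k.+1 (Phi rho k f) x = 0) /\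
  (* ... and coboundaries to coboundaries, so induces H^k(V,g) -> H^(k+1)_reg(V,V) *)
  (forall k f, is_cochain k.+1 f ->
      (exists h, is_cochain k h /\ forall x, f x = dbar br rho T k h x) ->
      exists h', is_reg_cochain k.+1 h' /\
        forall x, Phi rho k.+1 f x = dreg rho T k.+1 h' x).
Proof.
move=> _ rho_rep _.
have cochain_map k f : is_cochain k f ->
    forall x, dreg rho T k.+1 (Phi rho k f) x = Phi rho k.+1 (dbar br rho T k f) x.
  by move=> [dep_f _ _] x; exact: dreg_Phi rho_rep T k f x dep_f.
split; first exact: Phi_is_reg_cochain rho_rep.
split; first exact: Phi_linear rho_rep.
split; first exact: cochain_map.
split.
  move=> k f f_cochain closed_f x.
  by rewrite cochain_map // /Phi closed_f (rho0l rho_rep).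
move=> k f _ [h [h_cochain f_eq]]; exists (Phi rho k h); split.
  exact: (Phi_is_reg_cochain rho_rep h_cochain).
by move=> x; rewrite cochain_map // /Phi f_eq.
Qed.
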